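(* Let $m<M$ be real numbers and let $X$ be a random variable taking values in $[m,M]$, either discrete (taking finitely many values $x_1,\dots,x_n\in[m,M]$ with probabilities $p_1,\dots,p_n$) or continuous (with probability density $f$ on $[m,M]$). Let $\mu_1'$ be its mean and $\mu_2,\mu_3,\mu_4$ its second, third and fourth central moments, and assume $\mu_2\neq(\mu_1'-m)(M-\mu_1')$ and $\mu_2>0$. Then $$\mu_4-\mu_2^2-\frac{\mu_3^2}{\mu_2}\le (\mu_1'-m)(M-\mu_1')\Big(\frac{M-m}{4}\Big)^2\le\frac{(M-m)^4}{64}.$$
   Context: The mean is $\mu_1'=\sum_{i=1}^n p_i x_i$ (discrete case) or $\mu_1'=\int_m^M x f(x)\,dx$ (continuous case), where $\sum p_i=1$, resp. $\int_m^M f(x)\,dx=1$. The $r$-th central moment is $\mu_r=\sum_{i=1}^n p_i (x_i-\mu_1')^r$, resp. $\mu_r=\int_m^M (x-\mu_1')^r f(x)\,dx$. *)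

From HB Require Import structures.
From mathcomp Require Import all_boot all_order all_algebra.
From mathcomp Require Import all_classical all_reals all_analysis.
Set Implicit Arguments. Unset Strict Implicit. Unset Printing Implicit Defensive.
Import Order.TTheory GRing.Theory Num.Theory.
Import numFieldNormedType.Exports.
Local Open Scope classical_set_scope.
Local Open Scope ring_scope.

Definition dmean (R : realType) (n : nat) (p x : 'I_n -> R) : R :=
  \sum_(i < n) p i * x i.

Definition dcmoment (R : realType) (n : nat) (p x : 'I_n -> R) (r : nat) : R :=
  \sum_(i < n) p i * (x i - dmean p x) ^+ r.

Definition cmean (R : realType) (m M : R) (f : R -> R) : R :=
  Rintegral (@lebesgue_measure R) `[m, M] (fun x => x * f x).

Definition ccmoment (R : realType) (m M : R) (f : R -> R) (r : nat) : R :=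
  Rintegral (@lebesgue_measure R) `[m, M]
    (fun x => (x - cmean m M f) ^+ r * f x).

Definition is_density_on (R : realType) (m M : R) (f : R -> R) : Prop :=
  [/\ measurable_fun `[m, M] f,
      (forall x, m <= x <= M -> 0 <= f x),
      (@lebesgue_measure R).-integrable `[m, M] (fun x => (f x)%:E) &
      Rintegral (@lebesgue_measure R) `[m, M] f = 1].

Definition cor_concl (R : realType) (m M mu1 mu2 mu3 mu4 : R) : Prop :=
  mu4 - mu2 ^+ 2 - mu3 ^+ 2 / mu2 <= (mu1 - m) * (M - mu1) * ((M - m) / 4) ^+ 2
  /\ (mu1 - m) * (M - mu1) * ((M - m) / 4) ^+ 2 <= (M - m) ^+ 4 / 64.

(* With a = mu1' - m, b = M - mu1', r = (b - a)/4 and Y = X - mu1', the random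
   variable (X - m)(M - X)(Y - r)^2 is nonnegative, so its expectation, a linear
   combination of the central moments, is nonnegative.  For any c, d the quantity
   mu4 - mu2^2 - mu3^2/mu2 is at most E[(Y^2 - c Y - d)^2]; choosing c = 3(b - a)/4
   and d = ab/2, the bound ab((a + b)/4)^2 minus this expectation is exactly the
   expectation of the certificate above.  The second inequality is AM-GM for a, b. *)
From HB Require Import structures.
From mathcomp Require Import all_boot all_order all_algebra.
From mathcomp Require Import all_classical all_reals all_analysis.
From mathcomp Require Import measurable_realfun ring.
Set Implicit Arguments. Unset Strict Implicit. Unset Printing Implicit Defensive.
Import Order.TTheory GRing.Theory Num.Theory.
Import numFieldNormedType.Exports.
Local Open Scope classical_set_scope.
Local Open Scope ring_scope.

Section Certificate.
Variables (R : realFieldType) (m M mu : R).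

Definition moment_certificate (x : R) : R :=
  (x - m) * (M - x) * (x - mu - (M + m - 2 * mu) / 4) ^+ 2.

Definition moment_certificate_coef (k : nat) : R :=
  let a := mu - m in let b := M - mu in let r := (b - a) / 4 in
  match k with
  | 0 => a * b * r ^+ 2
  | 1 => r ^+ 2 * (b - a) - 2 * r * (a * b)
  | 2 => a * b - r ^+ 2 - 2 * r * (b - a)
  | 3 => 2 * r + b - a
  | _ => -1
  end.

Lemma moment_certificateE (x : R) :
  moment_certificate x =
  \sum_(k < 5) moment_certificate_coef k * (x - mu) ^+ k.
Proof. by rewrite /moment_certificate !big_ord_recr big_ord0 /=; ring. Qed.

Lemma moment_certificate_ge0 (x : R) : m <= x <= M -> 0 <= moment_certificate x.
Proof. by case/andP=> mx xM; rewrite mulr_ge0 ?sqr_ge0 // mulr_ge0 // subr_ge0. Qed.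

End Certificate.

Lemma moment_residual_le (R : realFieldType) (m2 m3 m4 c d : R) : 0 < m2 ->
  m4 - m2 ^+ 2 - m3 ^+ 2 / m2 <= m4 - 2 * c * m3 + (c ^+ 2 - 2 * d) * m2 + d ^+ 2.
Proof.
move=> m2_gt0; rewrite -subr_ge0.
have -> : m4 - 2 * c * m3 + (c ^+ 2 - 2 * d) * m2 + d ^+ 2
          - (m4 - m2 ^+ 2 - m3 ^+ 2 / m2) = (c * m2 - m3) ^+ 2 / m2 + (d - m2) ^+ 2.
  by field; rewrite gt_eqF.
by rewrite addr_ge0 ?divr_ge0 ?sqr_ge0 ?ltW.
Qed.

Lemma centered_moment_bound (R : realFieldType) (m M mu : R) (mom : nat -> R) :
  mom 0 = 1 -> mom 1 = 0 -> 0 < mom 2 ->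
  0 <= \sum_(k < 5) moment_certificate_coef m M mu k * mom k ->
  mom 4 - mom 2 ^+ 2 - mom 3 ^+ 2 / mom 2 <= (mu - m) * (M - mu) * ((M - m) / 4) ^+ 2.
Proof.
move=> mom0 mom1 mom2_gt0.
rewrite !big_ord_recr big_ord0 /= mom0 mom1 => cert_ge0.
set a := mu - m; set b := M - mu.
apply: le_trans (moment_residual_le (mom 3) (mom 4) (3 * (b - a) / 4) (a * b / 2) mom2_gt0) _.
rewrite -subr_ge0; apply: le_trans cert_ge0 _; rewrite le_eqVlt; apply/orP; left.
by apply/eqP; rewrite /a /b; field.
Qed.

Lemma spread_product_le (R : realFieldType) (m M mu : R) :
  (mu - m) * (M - mu) * ((M - m) / 4) ^+ 2 <= (M - m) ^+ 4 / 64.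
Proof.
have amgm := leif_AGM2 (mu - m) (M - mu).
have -> : (M - m) ^+ 4 / 64 = ((mu - m + (M - mu)) / 2) ^+ 2 * ((M - m) / 4) ^+ 2.
  by field.
by rewrite ler_wpM2r ?sqr_ge0 ?amgm.
Qed.

Lemma cor_concl_of_certificate (R : realType) (m M mu : R) (mom : nat -> R) :
  mom 0 = 1 -> mom 1 = 0 -> 0 < mom 2 ->
  0 <= \sum_(k < 5) moment_certificate_coef m M mu k * mom k ->
  cor_concl m M mu (mom 2) (mom 3) (mom 4).
Proof.
move=> mom0 mom1 mom2_gt0 cert_ge0; split; last exact: spread_product_le.
exact: centered_moment_bound.
Qed.

Section Discrete.
Variables (R : realType) (n : nat) (p x : 'I_n -> R).
Hypothesis p_sum1 : \sum_(i < n) p i = 1.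

Lemma dcmoment0 : dcmoment p x 0 = 1.
Proof. by rewrite /dcmoment -p_sum1; apply: eq_bigr => i _; rewrite mulr1. Qed.

Lemma dcmoment1 : dcmoment p x 1 = 0.
Proof.
rewrite /dcmoment (eq_bigr (fun i => p i * x i - dmean p x * p i)).
  by rewrite sumrB -mulr_sumr p_sum1 mulr1 subrr.
by move=> i _; rewrite expr1; ring.
Qed.

Lemma dcmoment_certificate_ge0 (m M : R) :
  (forall i, 0 <= p i) -> (forall i, m <= x i <= M) ->
  0 <= \sum_(k < 5) moment_certificate_coef m M (dmean p x) k * dcmoment p x k.
Proof.
move=> p_ge0 x_in.
have -> : \sum_(k < 5) moment_certificate_coef m M (dmean p x) k * dcmoment p x k =
          \sum_(i < n) p i * moment_certificate m M (dmean p x) (x i).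
  rewrite /dcmoment; under eq_bigr do rewrite mulr_sumr.
  rewrite exchange_big; apply: eq_bigr => i _.
  by rewrite moment_certificateE mulr_sumr; apply: eq_bigr => k _; ring.
by apply: sumr_ge0 => i _; rewrite mulr_ge0 ?moment_certificate_ge0.
Qed.

End Discrete.

Section Rintegral_sum.
Context d (T : measurableType d) (R : realType) (mu : {measure set T -> \bar R}).
Variable D : set T.
Hypothesis mD : measurable D.

Lemma Rintegral_sum (I : Type) (s : seq I) (f : I -> T -> R) :
  (forall i, mu.-integrable D (EFin \o f i)) ->
  \int[mu]_(x in D) (\sum_(i <- s) f i x) = \sum_(i <- s) \int[mu]_(x in D) f i x.
Proof.
move=> fi; apply: EFin_inj; rewrite /Rintegral fineK; last first.
  apply: integrable_fin_num => //.
  by apply: eq_integrable (integrable_sum _ _ (fun i _ => fi i)) => // x _; exact: sumEFin.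
rewrite EFin_sum_fine; last by move=> i _; exact: integrable_fin_num (fi i).
under eq_integral => x _ do rewrite -sumEFin.
exact: integral_sum.
Qed.

End Rintegral_sum.

Lemma integrable_continuous_mulr (R : realType) (a b : R) (h f : R -> R) :
  continuous h ->
  (@lebesgue_measure R).-integrable `[a, b] (EFin \o f) ->
  (@lebesgue_measure R).-integrable `[a, b] (EFin \o (fun x => h x * f x)).
Proof.
move=> h_cont fi.
have h_bounded : [bounded h x | x in `[a, b]].
  have /compact_bounded : compact (h @` `[a, b]).
    apply: continuous_compact; last exact: segment_compact.
    exact: continuous_subspaceT.
  case=> B [B_real hB]; exists B; split => // C BC x ab_x.
  by apply: hB => //; exists x.
have h_meas : measurable_fun `[a, b] h.
  exact: measurable_funS (continuous_measurable_fun h_cont).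
have := @integrableMr _ _ _ (@lebesgue_measure R) _ (measurable_itv _) h _
  h_meas h_bounded fi.
by apply: eq_integrable => // x _; rewrite /= EFinM.
Qed.

Section Continuous.
Variables (R : realType) (m M : R) (f : R -> R).
Local Notation lebesgue := (@lebesgue_measure R).
Hypothesis f_int : lebesgue.-integrable `[m, M] (EFin \o f).
Hypothesis f_int1 : \int[lebesgue]_(x in `[m, M]) f x = 1.

Lemma integrable_centered_power (c : R) (k : nat) :
  lebesgue.-integrable `[m, M] (EFin \o (fun x => (x - c) ^+ k * f x)).
Proof.
apply: integrable_continuous_mulr f_int => x.
apply: (continuous_comp (f := fun x : R => x - c) (g := (@GRing.exp R)^~ k)).
  by apply: cvgB; [exact: cvg_id | exact: cvg_cst].
exact: exprn_continuous.
Qed.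

Lemma ccmoment0 : ccmoment m M f 0 = 1.
Proof. by rewrite -f_int1; apply: eq_Rintegral => x _; rewrite mul1r. Qed.

Lemma ccmoment1 : ccmoment m M f 1 = 0.
Proof.
have xf_int : lebesgue.-integrable `[m, M] (EFin \o (fun x => x * f x)).
  by apply: eq_integrable (integrable_centered_power 0 1) => // x _; rewrite /= subr0.
rewrite /ccmoment; under eq_Rintegral => x _ do rewrite expr1 mulrBl.
rewrite RintegralB ?RintegralZl //; last first.
  by apply: eq_integrable (integrableZl _ (cmean m M f) f_int) => // x _; rewrite /= EFinM.
by rewrite [X in _ - _ * X]f_int1 mulr1 subrr.
Qed.

Lemma ccmoment_certificate_ge0 : (forall x, m <= x <= M -> 0 <= f x) ->
  0 <= \sum_(k < 5) moment_certificate_coef m M (cmean m M f) k * ccmoment m M f k.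
Proof.
move=> f_ge0; set c := cmean m M f; set coef := moment_certificate_coef m M c.
have coef_int k : lebesgue.-integrable `[m, M]
    (EFin \o (fun x => coef k * ((x - c) ^+ k * f x))).
  exact: eq_integrable (integrableZl _ (coef k) (integrable_centered_power c k)).
have -> : \sum_(k < 5) coef k * ccmoment m M f k =
          \int[lebesgue]_(x in `[m, M]) \sum_(k < 5) coef k * ((x - c) ^+ k * f x).
  rewrite Rintegral_sum //; apply: eq_bigr => k _.
  by rewrite RintegralZl ?integrable_centered_power.
apply: Rintegral_ge0 => x; rewrite /= in_itv /= => x_in.
under eq_bigr do rewrite mulrA.
by rewrite -mulr_suml -moment_certificateE mulr_ge0 ?f_ge0 ?moment_certificate_ge0.
Qed.

End Continuous.

Theorem corollary2p4 (R : realType) (m M : R) (hmM : m < M) :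
  (* discrete case *)
  (forall (n : nat) (p x : 'I_n -> R),
     (forall i, 0 <= p i) -> \sum_(i < n) p i = 1 ->
     (forall i, m <= x i <= M) ->
     dcmoment p x 2 != (dmean p x - m) * (M - dmean p x) ->
     0 < dcmoment p x 2 ->
     cor_concl m M (dmean p x) (dcmoment p x 2) (dcmoment p x 3) (dcmoment p x 4))
  /\
  (* continuous case *)
  (forall f : R -> R,
     is_density_on m M f ->
     ccmoment m M f 2 != (cmean m M f - m) * (M - cmean m M f) ->
     0 < ccmoment m M f 2 ->
     cor_concl m M (cmean m M f) (ccmoment m M f 2) (ccmoment m M f 3)
       (ccmoment m M f 4)).
Proof.
split.
- move=> n p x p_ge0 p_sum1 x_in _ mom2_gt0.
  apply: (cor_concl_of_certificate (mom := dcmoment p x)) mom2_gt0 _.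
  + exact: dcmoment0.
  + exact: dcmoment1.
  + exact: dcmoment_certificate_ge0.
- move=> f [_ f_ge0 f_int f_int1] _ mom2_gt0.
  apply: (cor_concl_of_certificate (mom := ccmoment m M f)) mom2_gt0 _.
  + exact: ccmoment0.
  + exact: ccmoment1.
  + exact: ccmoment_certificate_ge0.
Qed.
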